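(* Consider the Ising model $H(\sigma)=-J\sum_{\langle x,y\rangle}\sigma(x)\sigma(y)$ on the Cayley tree $\tau^k$ with $\theta=\tanh(J\beta)$ and $\alpha=\frac{1-\theta}{1+\theta}$, and let $A\subset N_k=\{1,\dots,k+1\}$ with $|A|=k$. Suppose $\alpha>1$. Then: 1) If $k\le 3$, every $H_A$-weakly periodic Gibbs measure on the invariant set $I_3$ is translation-invariant. 2) If $k=4$, there exists a critical value $\alpha_{cr}$ ($\approx 6.3716$) such that: for $\alpha<\alpha_{cr}$ there is exactly one $H_A$-weakly periodic Gibbs measure on $I_3$; for $\alpha=\alpha_{cr}$ there are exactly three $H_A$-weakly periodic Gibbs measures on $I_3$; for $\alpha>\alpha_{cr}$ there are exactly five $H_A$-weakly periodic Gibbs measures on $I_3$.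
   Context: $\tau^k=(V,L)$ is the Cayley tree of order $k\ge1$ (every vertex has $k+1$ neighbours). Its vertices are identified with the group $G_k$, the free product of $k+1$ cyclic groups of order two with generators $a_1,\dots,a_{k+1}$ ($a_i^2=e$), so that $x,y$ are neighbours iff $x=ya_i$ for some $i$; the root is $e$. For $x\in G_k$, $S(x)$ denotes the set of direct successors of $x$ (neighbours farther from $e$), and $x_\downarrow$ denotes the unique neighbour of $x$ not in $S(x)$. Spins take values $\sigma(x)\in\{-1,1\}$, $J\in\mathbb R$, $\beta=1/T>0$. Gibbs measures are constructed from boundary fields $h=\{h_x\in\mathbb R: x\in G_k\}$ via $\mu_n(\sigma_n)=Z_n^{-1}\exp\{-\beta H(\sigma_n)+\sum_{x\in W_n}h_x\sigma(x)\}$ on balls $V_n$ (with $W_n$ the sphere of radius $n$); these are consistent (and define a limiting Gibbs measure) iff $h_x=\sum_{y\in S(x)}f(h_y,\theta)$ for all $x$, where $f(h,\theta)=\operatorname{arcth}(\theta\tanh h)$. Distinct such $h$ give distinct measures. For $\emptyset\ne A\subseteq N_k$, $H_A=\{x\in G_k:\sum_{i\in A}w_x(a_i)\text{ is even}\}$, where $w_x(a_i)$ is the number of letters $a_i$ in the (reduced) word $x$; it is a normal subgroup of index 2. A collection $h$ is $H_A$-weakly periodic if $h_x$ depends only on whether $x\in H_A$ and whether $x_\downarrow\in H_A$: $h_x=h_1$ if $x\in H_A,x_\downarrow\in H_A$; $h_2$ if $x\in H_A,x_\downarrow\notin H_A$; $h_3$ if $x\notin H_A,x_\downarrow\in H_A$;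 $h_4$ if $x\notin H_A,x_\downarrow\notin H_A$. A Gibbs measure is $H_A$-weakly periodic if it corresponds to such an $h$. For $|A|=k$ the consistency condition becomes the system $h_1=kf(h_3,\theta)$, $h_2=(k-1)f(h_3,\theta)+f(h_1,\theta)$, $h_3=(k-1)f(h_2,\theta)+f(h_4,\theta)$, $h_4=kf(h_2,\theta)$, and $H_A$-weakly periodic Gibbs measures correspond bijectively to its solutions $(h_1,h_2,h_3,h_4)\in\mathbb R^4$. The invariant set is $I_3=\{h\in\mathbb R^4: h_1=-h_4,\ h_2=-h_3\}$; ''measures on $I_3$'' means those whose solution lies in $I_3$. A measure is translation-invariant if $h_x$ is constant in $x$ (i.e. $h_1=h_2=h_3=h_4$). *)

From Stdlib Require Import Reals List.
Open Scope R_scope.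

Definition arcth (x : R) : R := / 2 * ln ((1 + x) / (1 - x)).

Definition fI (h theta : R) : R := arcth (theta * tanh h).

Definition theta_of (J beta : R) : R := tanh (J * beta).
Definition alpha_of (J beta : R) : R :=
  (1 - theta_of J beta) / (1 + theta_of J beta).

Definition R4 : Type := (R * R * R * R)%type.

(* The consistency system for H_A-weakly periodic boundary laws, |A| = k.
   Its solutions are in bijection with H_A-weakly periodic Gibbs measures. *)
Definition wp_system (k : nat) (theta : R) (h : R4) : Prop :=
  match h with (h1, h2, h3, h4) =>
    h1 = INR k * fI h3 theta /\
    h2 = INR (k - 1) * fI h3 theta + fI h1 theta /\
    h3 = INR (k - 1) * fI h2 theta + fI h4 theta /\
    h4 = INR k * fI h2 theta
  end.

Definition in_I3 (h : R4) : Prop :=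
  match h with (h1, h2, h3, h4) => h1 = - h4 /\ h2 = - h3 end.

Definition transl_inv (h : R4) : Prop :=
  match h with (h1, h2, h3, h4) => h1 = h2 /\ h2 = h3 /\ h3 = h4 end.

Definition has_exactly {T : Type} (n : nat) (P : T -> Prop) : Prop :=
  exists l : list T, NoDup l /\ length l = n /\ (forall x, In x l <-> P x).

From Stdlib Require Import Reals List Lra Lia Psatz.
Open Scope R_scope.

(* In the variable [e2 h = exp (2 h)] the map [h |-> f(h, theta)] is the Möbius map
   [a |-> (a + alpha) / (alpha a + 1)], which commutes with [a |-> 1 / a]; so [f] is odd and on
   [I_3] the system reduces to [h4 = k f(h2)] and [h2 + (k - 1) f(h2) + f(h4) = 0].  With
   [q = e2 (f h2)], which ranges over [(1/alpha, alpha)], the solutions correspond to the roots of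
   one polynomial equation in [q].  It is divisible by [q^2 - 1], and [q = 1] is the
   translation-invariant solution; for [k <= 3] the quotient has no positive root.
   For [k = 4] the quotient is [q^3] times a cubic in [s = q + 1/q], and every root of the cubic
   in [(2, alpha + 1/alpha)] gives the two solutions [q] and [1/q].  For [alpha <= 5/2] the cubic is
   positive on [[2, oo)]; otherwise it is positive at both ends of the interval and has a single
   critical point inside, where its value has the sign of [-D(alpha)] with
   [D(alpha) = 4 alpha^5 - 23 alpha^4 - 18 alpha^3 + 13 alpha^2 + 32].  For [alpha > 5/2] the
   quintic [D] changes sign exactly once, at [alpha_cr], so the cubic has 0, 1 or 2 such roots. *)

(** * Exponential coordinates *)

Definition e2 (x : R) : R := exp (2 * x).
Definition half_ln (a : R) : R := / 2 * ln a.
Definition mobius (al a : R) : R := (a + al) / (al * a + 1).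
Definition mobius_inv (al q : R) : R := (al - q) / (al * q - 1).

Lemma e2_pos x : 0 < e2 x.
Proof. apply exp_pos. Qed.

Lemma e2_inj x y : e2 x = e2 y -> x = y.
Proof. intros E; apply exp_inv in E; lra. Qed.

Lemma e2_half_ln a : 0 < a -> e2 (half_ln a) = a.
Proof.
  intros Ha; unfold e2, half_ln.
  replace (2 * (/ 2 * ln a)) with (ln a) by field; exact (exp_ln a Ha).
Qed.

Lemma half_ln_e2 x : half_ln (e2 x) = x.
Proof. unfold e2, half_ln; rewrite ln_exp; field. Qed.

Lemma e2_plus x y : e2 (x + y) = e2 x * e2 y.
Proof. unfold e2; rewrite <- exp_plus; f_equal; ring. Qed.

Lemma e2_opp x : e2 (- x) = / e2 x.
Proof. unfold e2; rewrite <- exp_Ropp; f_equal; ring. Qed.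

Lemma e2_0 : e2 0 = 1.
Proof. unfold e2; rewrite Rmult_0_r; exact exp_0. Qed.

Lemma e2_INR_mult n x : e2 (INR n * x) = e2 x ^ n.
Proof.
  induction n as [|n IH].
  - rewrite Rmult_0_l, e2_0; reflexivity.
  - rewrite S_INR, Rmult_plus_distr_r, Rmult_1_l, e2_plus, IH; simpl; ring.
Qed.

Lemma tanh_e2 x : tanh x = (e2 x - 1) / (e2 x + 1).
Proof.
  unfold tanh, sinh, cosh, e2.
  replace (2 * x) with (x + x) by ring; rewrite exp_plus, exp_Ropp.
  pose proof (exp_pos x); field; split; nra.
Qed.

Lemma tanh_bounds x : -1 < tanh x < 1.
Proof.
  rewrite tanh_e2; pose proof (e2_pos x).
  split; apply (Rmult_lt_reg_r (e2 x + 1)); try lra;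
    unfold Rdiv; rewrite Rmult_assoc, Rinv_l; lra.
Qed.

Lemma e2_fI h th : -1 < th < 1 -> e2 (fI h th) = mobius ((1 - th) / (1 + th)) (e2 h).
Proof.
  intros Hth; unfold fI, arcth; pose proof (tanh_bounds h).
  assert (Ht : -1 < th * tanh h < 1) by (split; nra); set (t := th * tanh h) in *.
  change (e2 (half_ln ((1 + t) / (1 - t))) = mobius ((1 - th) / (1 + th)) (e2 h)).
  rewrite e2_half_ln by (apply Rdiv_lt_0_compat; lra).
  unfold t, mobius; rewrite tanh_e2; pose proof (e2_pos h).
  field; repeat split; nra.
Qed.

Lemma mobius_recip al a : 0 < a -> 0 < al -> mobius al (/ a) = / mobius al a.
Proof. intros Ha Hal; unfold mobius; field; repeat split; nra. Qed.

Lemma fI_opp h th : -1 < th < 1 -> fI (- h) th = - fI h th.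
Proof.
  intros Hth; apply e2_inj.
  assert (0 < (1 - th) / (1 + th)) by (apply Rdiv_lt_0_compat; lra).
  rewrite e2_opp, !e2_fI, e2_opp by exact Hth.
  apply mobius_recip; [apply e2_pos | assumption].
Qed.

(** * Reduction of the system on I_3 *)

Lemma wp_system_I3 k th h1 h2 h3 h4 : -1 < th < 1 ->
  (wp_system k th (h1, h2, h3, h4) /\ in_I3 (h1, h2, h3, h4)) <->
  (h1 = - h4 /\ h3 = - h2 /\ h4 = INR k * fI h2 th /\
   h2 + INR (k - 1) * fI h2 th + fI h4 th = 0).
Proof.
  intros Hth; unfold wp_system, in_I3; split.
  - intros [[_ [e2 [_ e4]]] [i1 i2]].
    assert (i3 : h3 = - h2) by lra; rewrite i1, i3, !fI_opp in e2 by exact Hth.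
    repeat split; lra.
  - intros [i1 [i3 [e4 e]]]; rewrite i1, i3, !fI_opp by exact Hth.
    repeat split; lra.
Qed.

Section Mobius.
Variable al : R.
Hypothesis al_gt1 : 1 < al.

Lemma mobius_range a : 0 < a -> 1 < al * mobius al a /\ mobius al a < al.
Proof.
  intros Ha; unfold mobius; split.
  - apply (Rmult_lt_reg_r (al * a + 1)); [nra|].
    replace (al * ((a + al) / (al * a + 1)) * (al * a + 1)) with (al * (a + al)) by (field; nra).
    nra.
  - apply (Rmult_lt_reg_r (al * a + 1)); [nra|].
    replace ((a + al) / (al * a + 1) * (al * a + 1)) with (a + al) by (field; nra).
    assert (0 < (al - 1) * a) by nra; nra.
Qed.

Lemma mobiusK a : 0 < a -> mobius_inv al (mobius al a) = a.
Proof.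
  intros Ha; pose proof (mobius_range a Ha) as [Hq _].
  unfold mobius_inv, mobius in *; field; split; nra.
Qed.

Lemma mobius_inv_pos q : 1 < al * q -> q < al -> 0 < mobius_inv al q.
Proof. intros; apply Rdiv_lt_0_compat; lra. Qed.

Lemma mobius_invK q : 1 < al * q -> q < al -> mobius al (mobius_inv al q) = q.
Proof. intros; unfold mobius, mobius_inv; field; split; nra. Qed.
End Mobius.

Definition I3_poly (k : nat) (al q : R) : Prop :=
  (al - q) * q ^ (k - 1) * (q ^ k + al) = (al * q - 1) * (al * q ^ k + 1).

Definition I3_point (k : nat) (al q : R) : R4 :=
  (- half_ln (q ^ k), half_ln (mobius_inv al q), - half_ln (mobius_inv al q), half_ln (q ^ k)).

Lemma I3_poly_iff k al q : 1 < al * q -> 0 < q ->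
  mobius_inv al q * q ^ (k - 1) * mobius al (q ^ k) = 1 <-> I3_poly k al q.
Proof.
  intros Hq Hq0; pose proof (pow_lt q k Hq0).
  unfold I3_poly, mobius_inv, mobius; split; intros E.
  - field_simplify_eq in E; [split; nra | lra].
  - field_simplify_eq; [lra | split; nra].
Qed.

Lemma I3_solutions k th al h : -1 < th < 1 -> al = (1 - th) / (1 + th) -> 1 < al ->
  (wp_system k th h /\ in_I3 h) <->
  exists q, 1 < al * q /\ q < al /\ I3_poly k al q /\ h = I3_point k al q.
Proof.
  intros Hth Hal Hal1; destruct h as [[[h1 h2] h3] h4].
  rewrite (wp_system_I3 k th h1 h2 h3 h4 Hth).
  assert (Hf : forall x, e2 (fI x th) = mobius al (e2 x)) by (intros; subst al; apply e2_fI, Hth).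
  split.
  - intros [i1 [i3 [e4 e]]].
    pose proof (e2_pos h2) as Ha; set (q := mobius al (e2 h2)).
    destruct (mobius_range al Hal1 (e2 h2) Ha) as [Hq1 Hq2]; fold q in Hq1, Hq2.
    assert (E4 : e2 h4 = q ^ k) by (rewrite e4, e2_INR_mult, Hf; reflexivity).
    assert (E2 : e2 h2 = mobius_inv al q) by (symmetry; apply mobiusK; assumption).
    exists q; repeat split; try assumption.
    + apply I3_poly_iff; [assumption | nra |].
      apply (f_equal e2) in e.
      rewrite !e2_plus, e2_INR_mult, !Hf, E4, e2_0 in e; fold q in e.
      rewrite <- E2; exact e.
    + unfold I3_point; rewrite <- E2, <- E4, !half_ln_e2, i1, i3; reflexivity.
  - intros [q [Hq1 [Hq2 [Hp Eh]]]]; injection Eh as i1 e2h i3 e4h.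
    assert (Hq0 : 0 < q) by nra.
    pose proof (mobius_inv_pos al q Hq1 Hq2) as Hm.
    assert (E2 : e2 h2 = mobius_inv al q) by (rewrite e2h; apply e2_half_ln, Hm).
    assert (E4 : e2 h4 = q ^ k) by (rewrite e4h; apply e2_half_ln, pow_lt, Hq0).
    assert (Fq : e2 (fI h2 th) = q) by (rewrite Hf, E2; apply mobius_invK; assumption).
    repeat split.
    + rewrite i1, e4h; reflexivity.
    + rewrite i3, e2h; reflexivity.
    + apply e2_inj; rewrite e2_INR_mult, Fq; exact E4.
    + apply e2_inj; rewrite e2_0, !e2_plus, e2_INR_mult, Fq, Hf, E2, E4.
      apply I3_poly_iff; assumption.
Qed.

Lemma pos_root_of_sq_sub1 q c : 0 < q -> c <> 0 -> (q ^ 2 - 1) * c = 0 -> q = 1.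
Proof.
  intros Hq Hc E; apply Rmult_integral in E as [E|E]; [|contradiction].
  assert (F : (q - 1) * (q + 1) = 0) by (rewrite <- E; ring).
  apply Rmult_integral in F; lra.
Qed.

Lemma I3_poly_small_k k al q : (1 <= k <= 3)%nat -> 1 < al -> 0 < q -> I3_poly k al q -> q = 1.
Proof.
  intros Hk Hal Hq Hp; unfold I3_poly in Hp; apply Rminus_diag_eq in Hp.
  destruct k as [|[|[|[|k]]]]; try lia; simpl in Hp.
  - apply (pos_root_of_sq_sub1 q (- (1 + al ^ 2))); [lra | nra |].
    rewrite <- Hp; ring.
  - apply (pos_root_of_sq_sub1 q (- (q ^ 2 + 1 + al * (al - 1) * q))); [lra | |].
    + assert (0 < al * (al - 1) * q) by (apply Rmult_lt_0_compat; nra); nra.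
    + rewrite <- Hp; ring.
  - apply (pos_root_of_sq_sub1 q (- ((q ^ 2 - al * q / 2) ^ 2 + (1 - al * q / 2) ^ 2
                                    + (al ^ 2 / 2 + 1) * q ^ 2))); [lra | |].
    + assert (0 < (al ^ 2 / 2 + 1) * q ^ 2) by (apply Rmult_lt_0_compat; nra); nra.
    + rewrite <- Hp; field.
Qed.

Lemma I3_point_1 k al : 1 < al -> I3_point k al 1 = (0, 0, 0, 0).
Proof.
  intros Hal; unfold I3_point, mobius_inv, half_ln.
  replace ((al - 1) / (al * 1 - 1)) with 1 by (field; lra).
  rewrite pow1, ln_1; f_equal; [f_equal; [f_equal|]|]; ring.
Qed.

Lemma I3_translation_invariant_small_k k J beta h :
  (1 <= k <= 3)%nat -> 1 < alpha_of J beta ->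
  wp_system k (theta_of J beta) h -> in_I3 h -> transl_inv h.
Proof.
  intros Hk Hal Hs HI.
  destruct (proj1 (I3_solutions k (theta_of J beta) (alpha_of J beta) h
                    (tanh_bounds _) eq_refl Hal) (conj Hs HI))
    as [q [Hq1 [Hq2 [Hp ->]]]].
  assert (Hq : 0 < q) by nra.
  rewrite (I3_poly_small_k k _ q Hk Hal Hq Hp), I3_point_1 by exact Hal.
  repeat split.
Qed.

Lemma I3_point_inj k al x y : 1 < al ->
  1 < al * x -> x < al -> 1 < al * y -> y < al -> I3_point k al x = I3_point k al y -> x = y.
Proof.
  intros Hal Hx1 Hx2 Hy1 Hy2 E; injection E as _ E _ _.
  apply (f_equal e2) in E; rewrite !e2_half_ln in E by (apply mobius_inv_pos; assumption).
  rewrite <- (mobius_invK al Hal x), <- (mobius_invK al Hal y), E by assumption; reflexivity.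
Qed.

(** * The case k = 4 *)

Definition cubic (al s : R) : R := s ^ 3 - al * s ^ 2 - 2 * s + al + al ^ 2.

(* The quotient by q^2 - 1 is palindromic of degree 6, hence q^3 times a cubic in q + 1/q. *)
Lemma I3_poly4_iff al q : 0 < q -> I3_poly 4 al q <-> q = 1 \/ cubic al (q + / q) = 0.
Proof.
  intros Hq; unfold I3_poly; simpl (4 - 1)%nat.
  assert (Id : (al - q) * q ^ 3 * (q ^ 4 + al) - (al * q - 1) * (al * q ^ 4 + 1)
             = - ((q - 1) * (q + 1) * q ^ 3) * cubic al (q + / q))
    by (unfold cubic; field; lra).
  pose proof (pow_lt q 3 Hq).
  split.
  - intros E; apply Rminus_diag_eq in E; rewrite Id in E.
    apply Rmult_integral in E as [E|E]; [|now right].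
    left; assert (F : (q - 1) * ((q + 1) * q ^ 3) = 0) by lra.
    apply Rmult_integral in F as [F|F]; [lra|].
    assert (0 < (q + 1) * q ^ 3) by (apply Rmult_lt_0_compat; lra); lra.
  - intros [->|E]; [ring|].
    apply Rminus_diag_uniq; rewrite Id, E; ring.
Qed.

Lemma I3_range_iff al q : 0 < q -> 1 < al -> (1 < al * q /\ q < al <-> q + / q < al + / al).
Proof.
  intros Hq Hal.
  assert (E : q + / q - (al + / al) = (al * q - 1) * (q - al) / (al * q)) by (field; lra).
  assert (Hd : 0 < al * q) by nra.
  assert (Iff : (al * q - 1) * (q - al) < 0 <-> q + / q < al + / al).
  { split; intros H.
    - assert ((al * q - 1) * (q - al) / (al * q) < 0) by (apply Rdiv_neg_pos; lra); lra.
    - replace ((al * q - 1) * (q - al)) with ((q + / q - (al + / al)) * (al * q))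
        by (rewrite E; field; lra).
      nra. }
  rewrite <- Iff; split; [intros [H1 H2]; nra|].
  intros H; destruct (Rlt_or_le 1 (al * q)); [split; nra|].
  assert (q < al) by nra; nra.
Qed.

Lemma two_lt_add_inv q : 0 < q -> q <> 1 -> 2 < q + / q.
Proof.
  intros Hq Hn; pose proof (Rsqr_pos_lt (q - 1) (Rminus_eq_contra _ _ Hn)); unfold Rsqr in *.
  replace (q + / q) with (2 + (q - 1) * (q - 1) / q) by (field; lra).
  assert (0 < (q - 1) * (q - 1) / q) by (apply Rdiv_lt_0_compat; lra); lra.
Qed.

Definition add_inv_root (s : R) : R := (s + sqrt (s ^ 2 - 4)) / 2.

Lemma add_inv_root_spec s : 2 < s -> 1 < add_inv_root s /\ add_inv_root s + / add_inv_root s = s.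
Proof.
  intros Hs; unfold add_inv_root.
  assert (Hd : 0 < s ^ 2 - 4) by nra.
  pose proof (sqrt_lt_R0 _ Hd) as Hw; pose proof (sqrt_sqrt _ (Rlt_le _ _ Hd)) as Hw2.
  set (w := sqrt (s ^ 2 - 4)) in *.
  split; [lra|].
  apply (Rmult_eq_reg_r ((s + w) / 2)); [|lra].
  field_simplify; [nra | lra].
Qed.

Lemma add_inv_eq q s : 0 < q -> 2 < s -> q + / q = s ->
  q = add_inv_root s \/ q = / add_inv_root s.
Proof.
  intros Hq Hs E; destruct (add_inv_root_spec s Hs) as [Hr Er].
  set (r := add_inv_root s) in *.
  assert (F : (q - r) * (q - / r) = 0).
  { replace ((q - r) * (q - / r)) with (q * (q + / q - (r + / r))) by (field; lra).
    rewrite E, Er; ring. }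
  apply Rmult_integral in F; lra.
Qed.

Definition add_inv_preimage (ss : list R) : list R :=
  flat_map (fun s => add_inv_root s :: / add_inv_root s :: nil) ss.

Section AddInvPreimage.
Variable ss : list R.
Hypothesis ss_gt2 : forall s, In s ss -> 2 < s.

Lemma in_add_inv_preimage q : In q (add_inv_preimage ss) <-> 0 < q /\ In (q + / q) ss.
Proof.
  unfold add_inv_preimage; rewrite in_flat_map; split.
  - intros [s [Hs Hq]]; destruct (add_inv_root_spec s (ss_gt2 s Hs)) as [Hr Er].
    destruct Hq as [<-|[<-|[]]].
    + split; [lra | now rewrite Er].
    + split; [apply Rinv_0_lt_compat; lra|].
      rewrite Rinv_inv, Rplus_comm, Er; exact Hs.
  - intros [Hq Hs]; exists (q + / q); split; [exact Hs|].
    destruct (add_inv_eq q _ Hq (ss_gt2 _ Hs) eq_refl) as [E|E]; rewrite E at 1; simpl; auto.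
Qed.
End AddInvPreimage.

Lemma add_inv_preimage_length ss : length (add_inv_preimage ss) = (2 * length ss)%nat.
Proof. induction ss as [|s ss IH]; simpl; [reflexivity|]; rewrite IH; lia. Qed.

Lemma add_inv_preimage_NoDup ss : NoDup ss -> (forall s, In s ss -> 2 < s) ->
  NoDup (add_inv_preimage ss).
Proof.
  induction ss as [|s ss IH]; intros Hnd Hgt2; [constructor|].
  inversion Hnd as [|? ? Hs Hnd']; subst.
  assert (Hgt2' : forall s', In s' ss -> 2 < s') by (intros; apply Hgt2; now right).
  destruct (add_inv_root_spec s (Hgt2 s (or_introl eq_refl))) as [Hr Er].
  assert (Hout : forall q, q + / q = s -> ~ In q (add_inv_preimage ss)).
  { intros q Eq Hin; apply (in_add_inv_preimage ss Hgt2') in Hin as [_ Hin].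
    rewrite Eq in Hin; contradiction. }
  constructor; [|constructor].
  - intros [E|E].
    + assert (/ add_inv_root s < / 1) by (apply Rinv_lt_contravar; lra).
      rewrite Rinv_1 in *; lra.
    + exact (Hout _ Er E).
  - apply Hout; rewrite Rinv_inv, Rplus_comm; exact Er.
  - apply IH; assumption.
Qed.

Section CountK4.
Variables (th al : R) (ss : list R).
Hypothesis th_bounds : -1 < th < 1.
Hypothesis al_def : al = (1 - th) / (1 + th).
Hypothesis al_gt1 : 1 < al.
Hypothesis ss_NoDup : NoDup ss.
Hypothesis ss_spec : forall s, In s ss <-> 2 < s < al + / al /\ cubic al s = 0.

Let ss_gt2 s : In s ss -> 2 < s.
Proof. now intros Hs; apply ss_spec in Hs. Qed.

Lemma I3_param4_iff q :
  (1 < al * q /\ q < al /\ I3_poly 4 al q) <-> In q (1 :: add_inv_preimage ss).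
Proof.
  simpl; rewrite (in_add_inv_preimage ss ss_gt2); split.
  - intros [H1 [H2 Hp]]; assert (Hq : 0 < q) by nra.
    destruct (Req_dec q 1) as [E|E]; [now left|right].
    apply (I3_poly4_iff al q Hq) in Hp as [|Hc]; [contradiction|].
    split; [exact Hq|]; apply ss_spec; split; [split|exact Hc].
    + apply two_lt_add_inv; assumption.
    + apply (I3_range_iff al q Hq al_gt1); split; assumption.
  - intros [<-|[Hq Hs]].
    + split; [lra|]; split; [lra|]; unfold I3_poly; simpl; ring.
    + apply ss_spec in Hs as [[_ Hs] Hc].
      destruct (proj2 (I3_range_iff al q Hq al_gt1) Hs) as [H1 H2].
      split; [exact H1|]; split; [exact H2|]; apply I3_poly4_iff; auto.
Qed.

Lemma I3_count4 : has_exactly (1 + 2 * length ss) (fun h => wp_system 4 th h /\ in_I3 h).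
Proof.
  exists (map (I3_point 4 al) (1 :: add_inv_preimage ss)); split; [|split].
  - apply NoDup_map_NoDup_ForallPairs.
    + intros x y Hx Hy; apply I3_param4_iff in Hx as [? [? _]], Hy as [? [? _]].
      apply I3_point_inj; assumption.
    + constructor; [|apply add_inv_preimage_NoDup; assumption].
      intros E; apply (in_add_inv_preimage ss ss_gt2) in E as [_ E].
      apply ss_gt2 in E; rewrite Rinv_1 in E; lra.
  - rewrite length_map; simpl; rewrite add_inv_preimage_length; reflexivity.
  - intros h; rewrite in_map_iff, (I3_solutions 4 th al h th_bounds al_def al_gt1); split.
    + intros [q [<- Hq]]; apply I3_param4_iff in Hq as [H1 [H2 Hp]].
      exists q; auto.
    + intros [q [H1 [H2 [Hp ->]]]]; exists q; split; [reflexivity|].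
      apply I3_param4_iff; auto.
Qed.
End CountK4.

(** * The critical value of the cubic *)

Definition cubic_crit (al : R) : R := (al + sqrt (al ^ 2 + 6)) / 3.

Definition crit_discr (al : R) : R :=
  4 * al ^ 5 - 23 * al ^ 4 - 18 * al ^ 3 + 13 * al ^ 2 + 32.

Lemma sqrt_al2_add6 al : 0 < al ->
  al < sqrt (al ^ 2 + 6) /\ sqrt (al ^ 2 + 6) * sqrt (al ^ 2 + 6) = al ^ 2 + 6.
Proof.
  intros H; pose proof (sqrt_sqrt (al ^ 2 + 6) ltac:(nra)) as E.
  pose proof (sqrt_pos (al ^ 2 + 6)); split; [nra | exact E].
Qed.

Lemma cubic_crit_deriv al : 0 < al -> 3 * cubic_crit al ^ 2 - 2 * al * cubic_crit al - 2 = 0.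
Proof.
  intros H; destruct (sqrt_al2_add6 al H) as [_ E]; unfold cubic_crit.
  set (r := sqrt (al ^ 2 + 6)) in *.
  replace (3 * ((al + r) / 3) ^ 2 - 2 * al * ((al + r) / 3) - 2) with ((r * r - al ^ 2 - 6) / 3)
    by field.
  rewrite E; field.
Qed.

Lemma cubic_sub_crit al s : 0 < al ->
  cubic al s - cubic al (cubic_crit al) = (s - cubic_crit al) ^ 2 * (s + 2 * cubic_crit al - al).
Proof.
  intros H; pose proof (cubic_crit_deriv al H) as Hc; set (u := cubic_crit al) in *.
  replace (cubic al s - cubic al u)
    with ((s - u) ^ 2 * (s + 2 * u - al) + (s - u) * (3 * u ^ 2 - 2 * al * u - 2))
    by (unfold cubic; ring).
  rewrite Hc; ring.
Qed.

Lemma cubic_ge_crit al s : 0 < al -> 0 <= s -> cubic al (cubic_crit al) <= cubic al s.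
Proof.
  intros H Hs; pose proof (cubic_sub_crit al s H) as E.
  destruct (sqrt_al2_add6 al H) as [Hr _].
  assert (0 <= (s - cubic_crit al) ^ 2 * (s + 2 * cubic_crit al - al)); [|lra].
  apply Rmult_le_pos; [apply pow2_ge_0 | unfold cubic_crit; lra].
Qed.

Lemma cubic_crit_value al : 0 < al ->
  exists X, 0 < X /\ X * X - (- 2 * al ^ 3 + 27 * al ^ 2 + 9 * al) ^ 2 = 27 * crit_discr al /\
    27 * cubic al (cubic_crit al) = (- 2 * al ^ 3 + 27 * al ^ 2 + 9 * al) - X.
Proof.
  intros H; destruct (sqrt_al2_add6 al H) as [Hr E].
  pose proof (cubic_crit_deriv al H) as Hc.
  exists ((2 * al ^ 2 + 12) * sqrt (al ^ 2 + 6)); split; [|split].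
  - apply Rmult_lt_0_compat; nra.
  - replace ((2 * al ^ 2 + 12) * sqrt (al ^ 2 + 6) * ((2 * al ^ 2 + 12) * sqrt (al ^ 2 + 6)))
      with ((2 * al ^ 2 + 12) ^ 2 * (sqrt (al ^ 2 + 6) * sqrt (al ^ 2 + 6))) by ring.
    rewrite E; unfold crit_discr; ring.
  - set (u := cubic_crit al) in *.
    replace (cubic al u) with ((u - al / 3) * (3 * u ^ 2 - 2 * al * u - 2) / 3
                                - (2 * al ^ 2 + 12) * u / 9 + 7 * al / 9 + al ^ 2)
      by (unfold cubic; field).
    rewrite Hc; unfold u, cubic_crit; field.
Qed.

Lemma cubic_crit_neg al : 0 < al -> 0 < crit_discr al -> cubic al (cubic_crit al) < 0.
Proof.
  intros H HD; destruct (cubic_crit_value al H) as [X [HX [EX EC]]].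
  set (Y := - 2 * al ^ 3 + 27 * al ^ 2 + 9 * al) in *.
  assert (Y < X); [|lra].
  destruct (Rlt_or_le Y 0); [lra|]; simpl in EX; nra.
Qed.

Lemma crit_rational_part_pos al : 0 < al -> al < 13 -> 0 < - 2 * al ^ 3 + 27 * al ^ 2 + 9 * al.
Proof.
  intros H1 H2.
  replace (- 2 * al ^ 3 + 27 * al ^ 2 + 9 * al) with (al * (2 * al * (13 - al) + al + 9)) by ring.
  assert (0 < 2 * al * (13 - al)) by (apply Rmult_lt_0_compat; lra).
  apply Rmult_lt_0_compat; lra.
Qed.

Lemma cubic_crit_pos al : 0 < al -> al < 13 -> crit_discr al < 0 -> 0 < cubic al (cubic_crit al).
Proof.
  intros H1 H2 HD; destruct (cubic_crit_value al H1) as [X [HX [EX EC]]].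
  pose proof (crit_rational_part_pos al H1 H2) as HY.
  set (Y := - 2 * al ^ 3 + 27 * al ^ 2 + 9 * al) in *.
  assert (X < Y); [simpl in EX; nra | lra].
Qed.

Lemma cubic_crit_zero al : 0 < al -> al < 13 -> crit_discr al = 0 -> cubic al (cubic_crit al) = 0.
Proof.
  intros H1 H2 HD; destruct (cubic_crit_value al H1) as [X [HX [EX EC]]].
  pose proof (crit_rational_part_pos al H1 H2) as HY.
  set (Y := - 2 * al ^ 3 + 27 * al ^ 2 + 9 * al) in *.
  assert (E : (Y - X) * (Y + X) = 0) by (simpl in EX; nra).
  apply Rmult_integral in E as [E|E]; lra.
Qed.

Lemma cubic_at_2_pos al : 0 < cubic al 2.
Proof.
  replace (cubic al 2) with ((al - 3 / 2) ^ 2 + 7 / 4) by (unfold cubic; field).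
  pose proof (pow2_ge_0 (al - 3 / 2)); lra.
Qed.

Lemma cubic_at_max_pos al : 1 < al -> 0 < cubic al (al + / al).
Proof.
  intros H; unfold cubic.
  replace ((al + / al) ^ 3 - al * (al + / al) ^ 2 - 2 * (al + / al) + al + al ^ 2)
    with (al ^ 2 + / al ^ 3) by (field; lra).
  assert (0 < / al ^ 3) by (apply Rinv_0_lt_compat, pow_lt; lra); nra.
Qed.

Lemma cubic_crit_gt2 al : 5 / 2 < al -> 2 < cubic_crit al.
Proof.
  intros H; destruct (sqrt_al2_add6 al) as [_ E]; [lra|]; unfold cubic_crit.
  pose proof (sqrt_pos (al ^ 2 + 6)); nra.
Qed.

Lemma cubic_crit_lt_max al : 1 < al -> cubic_crit al < al + / al.
Proof.
  intros H; destruct (sqrt_al2_add6 al) as [Hr E]; [lra|]; unfold cubic_crit.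
  assert (0 < / al) by (apply Rinv_0_lt_compat; lra).
  assert (sqrt (al ^ 2 + 6) < 2 * al + 3 * / al); [|lra].
  apply Rsqr_incrst_0; [| lra | lra]; unfold Rsqr; rewrite E.
  replace ((2 * al + 3 * / al) * (2 * al + 3 * / al)) with (4 * al ^ 2 + 12 + 9 * (/ al * / al))
    by (field; lra).
  assert (0 < / al * / al) by (apply Rmult_lt_0_compat; lra); nra.
Qed.

Lemma cubic_pos_small_al al s : 1 < al -> al <= 5 / 2 -> 2 <= s -> 0 < cubic al s.
Proof.
  intros H1 H2 H3; pose proof (cubic_at_2_pos al).
  replace (cubic al s)
    with (cubic al 2 + (s - 2) * ((s - 2) * (s - 2) + (6 - al) * (s - 2) + (10 - 4 * al)))
    by (unfold cubic; ring).
  assert (0 <= (s - 2) * ((s - 2) * (s - 2) + (6 - al) * (s - 2) + (10 - 4 * al))); [|lra].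
  apply Rmult_le_pos; nra.
Qed.

Lemma crit_discr_neg_mid al : 5 / 2 <= al -> al <= 11 / 2 -> crit_discr al < 0.
Proof.
  intros H1 H2; unfold crit_discr.
  assert (0 < al ^ 4) by (apply pow_lt; lra).
  assert (al ^ 4 * (4 * al - 23) <= - al ^ 4) by nra.
  replace (al ^ 4) with (al ^ 2 * al ^ 2) in * by ring.
  replace (al ^ 5) with (al ^ 2 * al ^ 2 * al) by ring.
  replace (al ^ 3) with (al ^ 2 * al) by ring.
  nra.
Qed.

Lemma crit_discr_shift a : crit_discr (11 / 2 + a) =
  - 55753 / 16 + a * (6017 / 4 + a * (4393 / 2 + a * (686 + a * (87 + 4 * a)))).
Proof. unfold crit_discr; field. Qed.

(* After the shift by 11/2 every non-constant coefficient is positive. *)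
Lemma crit_discr_incr x y : 11 / 2 <= x -> x < y -> crit_discr x < crit_discr y.
Proof.
  intros Hx Hxy.
  replace x with (11 / 2 + (x - 11 / 2)) by ring; replace y with (11 / 2 + (y - 11 / 2)) by ring.
  rewrite !crit_discr_shift; set (a := x - 11 / 2); set (b := y - 11 / 2).
  assert (Ha : 0 <= a) by (unfold a; lra); assert (Hab : a < b) by (unfold a, b; lra).
  assert (0 <= a * (87 + 4 * a) <= b * (87 + 4 * b)) by (split; nra).
  assert (0 <= a * (686 + a * (87 + 4 * a)) <= b * (686 + b * (87 + 4 * b))) by (split; nra).
  assert (0 <= a * (4393 / 2 + a * (686 + a * (87 + 4 * a)))
            <= b * (4393 / 2 + b * (686 + b * (87 + 4 * b)))) by (split; nra).
  nra.
Qed.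

(* The third root is al - s1 - s2, and Vieta's product s1 s2 (al - s1 - s2) = - al - al^2
   makes it negative. *)
Lemma cubic_nonneg_roots al s1 s2 s : 0 < al -> 0 < s1 < s2 ->
  cubic al s1 = 0 -> cubic al s2 = 0 -> 0 <= s -> cubic al s = 0 -> s = s1 \/ s = s2.
Proof.
  intros Hal [H1 H12] C1 C2 Hs Cs; set (r := al - s1 - s2).
  set (c1 := - 2 - (s1 * s2 + s1 * r + s2 * r)); set (c0 := al + al ^ 2 + s1 * s2 * r).
  assert (Id : forall x, cubic al x = (x - s1) * (x - s2) * (x - r) + c1 * x + c0)
    by (intros; unfold cubic, c1, c0, r; ring).
  rewrite Id in C1, C2, Cs.
  assert (P1 : c1 * s1 + c0 = 0) by (rewrite <- C1; ring).
  assert (P2 : c1 * s2 + c0 = 0) by (rewrite <- C2; ring).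
  assert (Hc1 : c1 = 0).
  { assert (E : c1 * (s2 - s1) = 0) by lra.
    apply Rmult_integral in E as [E|E]; lra. }
  rewrite Hc1 in P1, Cs; rewrite Rmult_0_l, Rplus_0_l in P1.
  assert (Hr : r < 0).
  { destruct (Rlt_or_le r 0) as [|Hr]; [assumption|].
    assert (0 <= s1 * s2 * r) by (apply Rmult_le_pos; nra).
    unfold c0 in P1; nra. }
  rewrite P1, Rmult_0_l, !Rplus_0_r in Cs.
  apply Rmult_integral in Cs as [E|E]; [apply Rmult_integral in E as [E|E]|]; lra.
Qed.

Section Regimes.
Variable ac : R.
Hypothesis ac_bounds : 637 / 100 < ac < 638 / 100.
Hypothesis ac_root : crit_discr ac = 0.

Let crit_discr_neg_below al : 5 / 2 <= al < ac -> crit_discr al < 0.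
Proof.
  intros [H1 H2]; destruct (Rle_or_lt al (11 / 2)).
  - apply crit_discr_neg_mid; lra.
  - rewrite <- ac_root; apply crit_discr_incr; lra.
Qed.

Let crit_discr_pos_above al : ac < al -> 0 < crit_discr al.
Proof. intros H; rewrite <- ac_root; apply crit_discr_incr; lra. Qed.

Lemma cubic_roots_below al : 1 < al < ac ->
  forall s, In s nil <-> 2 < s < al + / al /\ cubic al s = 0.
Proof.
  intros [H1 H2] s; split; [intros []|]; intros [[Hs _] Hc].
  enough (0 < cubic al s) by lra.
  destruct (Rle_or_lt al (5 / 2)); [apply cubic_pos_small_al; lra|].
  pose proof (cubic_crit_pos al ltac:(lra) ltac:(lra) (crit_discr_neg_below al ltac:(lra))).
  pose proof (cubic_ge_crit al s ltac:(lra) ltac:(lra)); lra.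
Qed.

Lemma cubic_roots_at :
  forall s, In s (cubic_crit ac :: nil) <-> 2 < s < ac + / ac /\ cubic ac s = 0.
Proof.
  intros s; pose proof (cubic_crit_zero ac ltac:(lra) ltac:(lra) ac_root) as Hc.
  split.
  - intros [<-|[]]; split; [split|exact Hc].
    + apply cubic_crit_gt2; lra.
    + apply cubic_crit_lt_max; lra.
  - intros [[Hs _] Hcs]; left.
    pose proof (cubic_sub_crit ac s ltac:(lra)) as E; rewrite Hcs, Hc in E.
    destruct (sqrt_al2_add6 ac) as [Hr _]; [lra|].
    assert (Hp : 0 < s + 2 * cubic_crit ac - ac) by (unfold cubic_crit; lra).
    assert (E2 : (s - cubic_crit ac) ^ 2 * (s + 2 * cubic_crit ac - ac) = 0) by lra.
    apply Rmult_integral in E2 as [E2|E2]; [|lra].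
    destruct (Req_dec s (cubic_crit ac)) as [|N]; [now symmetry|].
    exfalso; exact (pow_nonzero _ 2 (Rminus_eq_contra _ _ N) E2).
Qed.

(* The cubic is positive at both ends of (2, al + 1/al) and negative at its critical point. *)
Lemma cubic_roots_above al : ac < al ->
  exists s1 s2, s1 < s2 /\ forall s, In s (s1 :: s2 :: nil) <-> 2 < s < al + / al /\ cubic al s = 0.
Proof.
  intros H.
  pose proof (cubic_crit_neg al ltac:(lra) (crit_discr_pos_above al H)) as Hc.
  pose proof (cubic_at_2_pos al); pose proof (cubic_at_max_pos al ltac:(lra)).
  pose proof (cubic_crit_gt2 al ltac:(lra)); pose proof (cubic_crit_lt_max al ltac:(lra)).
  assert (Cont : continuity (cubic al)) by (unfold cubic; reg).
  assert (Cont' : continuity (fun x => - cubic al x)) by (unfold cubic; reg).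
  destruct (IVT _ 2 (cubic_crit al) Cont' ltac:(lra) ltac:(lra) ltac:(lra)) as [s1 [[L1 L2] E1]].
  destruct (IVT _ (cubic_crit al) (al + / al) Cont ltac:(lra) ltac:(lra) ltac:(lra))
    as [s2 [[L3 L4] E2]].
  assert (N1 : s1 <> 2) by (intros ->; lra).
  assert (N2 : s1 <> cubic_crit al) by (intros ->; lra).
  assert (N3 : s2 <> cubic_crit al) by (intros ->; lra).
  assert (N4 : s2 <> al + / al) by (intros ->; lra).
  exists s1, s2; split; [lra|]; intros s; split.
  - intros [<-|[<-|[]]]; repeat split; lra.
  - intros [[Hs _] Cs].
    destruct (cubic_nonneg_roots al s1 s2 s ltac:(lra) ltac:(lra) ltac:(lra) E2 ltac:(lra) Cs)
      as [->| ->]; simpl; auto.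
Qed.
End Regimes.

Lemma crit_discr_root : exists ac, 637 / 100 < ac < 638 / 100 /\ crit_discr ac = 0.
Proof.
  assert (Cont : continuity crit_discr) by (unfold crit_discr; reg).
  assert (D1 : crit_discr (637 / 100) < 0) by (unfold crit_discr; lra).
  assert (D2 : 0 < crit_discr (638 / 100)) by (unfold crit_discr; lra).
  destruct (IVT crit_discr (637 / 100) (638 / 100) Cont ltac:(lra) D1 D2) as [ac [[L1 L2] HD]].
  exists ac; split; [split|exact HD].
  - destruct L1 as [L1|E]; [exact L1 | rewrite <- E in HD; lra].
  - destruct L2 as [L2|E]; [exact L2 | rewrite E in HD; lra].
Qed.

Theorem theorem3 :
  (forall (k : nat) (J beta : R),
     (1 <= k)%nat -> (k <= 3)%nat -> 0 < beta -> 1 < alpha_of J beta ->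
     forall h : R4, wp_system k (theta_of J beta) h -> in_I3 h -> transl_inv h)
  /\
  (exists alpha_cr : R,
     637 / 100 < alpha_cr < 638 / 100 /\
     forall (J beta : R), 0 < beta -> 1 < alpha_of J beta ->
       (alpha_of J beta < alpha_cr ->
          has_exactly 1 (fun h => wp_system 4 (theta_of J beta) h /\ in_I3 h)) /\
       (alpha_of J beta = alpha_cr ->
          has_exactly 3 (fun h => wp_system 4 (theta_of J beta) h /\ in_I3 h)) /\
       (alpha_cr < alpha_of J beta ->
          has_exactly 5 (fun h => wp_system 4 (theta_of J beta) h /\ in_I3 h))).
Proof.
  split.
  - intros k J beta Hk1 Hk3 _ Hal h.
    apply I3_translation_invariant_small_k; [lia | exact Hal].
  - destruct crit_discr_root as [ac [Hac HD]]; exists ac; split; [exact Hac|].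
    intros J beta _ Hal.
    pose proof (I3_count4 (theta_of J beta) (alpha_of J beta)) as Count.
    specialize (fun ss => Count ss (tanh_bounds _) eq_refl Hal).
    split; [|split]; intros Hac'.
    + apply (Count nil); [constructor | exact (cubic_roots_below ac Hac HD _ (conj Hal Hac'))].
    + apply (Count (cubic_crit ac :: nil)); [repeat constructor; intros [] | rewrite Hac'].
      exact (cubic_roots_at ac Hac HD).
    + destruct (cubic_roots_above ac Hac HD _ Hac') as [s1 [s2 [Hlt Hroots]]].
      apply (Count (s1 :: s2 :: nil)); [|exact Hroots].
      repeat constructor; [intros [E|[]]; lra | intros []].
Qed.
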